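(* Let $G$ be a symmetric two-player game with action space $\mathcal{A}=\mathbb{R}$ and payoff function $u$ satisfying Assumptions (A1) and (A2) below, and let $\epsilon_R>0$. On the strategy space $\mathcal{S}=\mathcal{B}\cup\mathcal{R}$ with the penalized fitness $f(\sigma,\sigma')=u\big(r(\sigma,\sigma'),r(\sigma',\sigma)\big)-\epsilon_R\,\mathbb{I}[\sigma\in\mathcal{R}]$, the strategy $B(\mathrm{NE}(0,0))$ is the unique Nash equilibrium, and it is an evolutionarily stable strategy.
   Context: Base game: a symmetric two-player game $G$ with action set $\mathcal{A}=\mathbb{R}$; $u(x,y)$ denotes the payoff of a player who plays $x$ when the opponent plays $y$. Subjective utilities: for $\alpha\in\mathbb{R}$, $V^{\alpha}(x,y)=u(x,y)+\alpha\,u(y,x)$. For $\alpha_i,\alpha_j\in\mathbb{R}$, $G(\alpha_i,\alpha_j)$ is the game with the same actions in which player $i$ has payoff $V^{\alpha_i}$ and player $j$ has payoff $V^{\alpha_j}$. $\mathrm{NE}(\alpha_i,\alpha_j)$ denotes the action of the player with parameter $\alpha_i$ in the Nash equilibrium of $G(\alpha_i,\alpha_j)$ (the opponent plays $\mathrm{NE}(\alpha_j,\alpha_i)$). $\mathrm{BR}(b;\alpha)$ is the maximizer of $a\mapsto V^{\alpha}(a,b)$. Assumptions: (A1) for all $\alpha_i,\alpha_j$, $G(\alpha_i,\alpha_j)$ has a unique (pure) Nash equilibrium; (A2) for all $b,\alpha$, $a\mapsto V^{\alpha}(a,b)$ has a unique global maximum $\mathrm{BR}(b;\alpha)$. Strategies: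 $\mathcal{B}=\{B(a):a\in\mathcal{A}\}$ and $\mathcal{R}=\{R(\alpha):\alpha\in\mathbb{R}\}$, with actions $r(B(a),\sigma')=a$ for all $\sigma'$; $r(R(\alpha),B(b))=\mathrm{BR}(b;\alpha)$; $r(R(\alpha),R(\alpha'))=\mathrm{NE}(\alpha,\alpha')$. $\mathbb{I}[\cdot]$ is the indicator function. Stability notions relative to a strategy space $\Sigma$ and fitness $f$: $\sigma$ is a Nash equilibrium if $f(\sigma,\sigma)\ge f(\sigma',\sigma)$ for all $\sigma'\in\Sigma$; a neutrally stable strategy if it is a Nash equilibrium and for every $\sigma'$ with $f(\sigma',\sigma)=f(\sigma,\sigma)$ one has $f(\sigma,\sigma')\ge f(\sigma',\sigma')$; an evolutionarily stable strategy if moreover this inequality is strict for every such $\sigma'\neq\sigma$. *)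

From Stdlib Require Import Reals ClassicalEpsilon.
Open Scope R_scope.

Definition V (u : R -> R -> R) (alpha x y : R) : R := u x y + alpha * u y x.

Definition isNEpair (u : R -> R -> R) (ai aj x y : R) : Prop :=
  (forall x', V u ai x' y <= V u ai x y) /\
  (forall y', V u aj y' x <= V u aj y x).

Definition Assumption_A1 (u : R -> R -> R) : Prop :=
  forall ai aj : R, exists! p : R * R, isNEpair u ai aj (fst p) (snd p).

Definition Assumption_A2 (u : R -> R -> R) : Prop :=
  forall b alpha : R, exists! a : R, forall a', V u alpha a' b <= V u alpha a b.

(* The Nash equilibrium pair of G(ai,aj) (meaningful under Assumption_A1). *)
Definition NEpair (u : R -> R -> R) (ai aj : R) : R * R :=
  epsilon (inhabits (0, 0)) (fun p : R * R => isNEpair u ai aj (fst p) (snd p)).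

Definition NE (u : R -> R -> R) (ai aj : R) : R := fst (NEpair u ai aj).

(* BR(b; alpha): the maximizer of a |-> V^alpha(a,b) (meaningful under Assumption_A2). *)
Definition BR (u : R -> R -> R) (b alpha : R) : R :=
  epsilon (inhabits 0) (fun a : R => forall a', V u alpha a' b <= V u alpha a b).

Inductive strat : Type :=
| Bs : R -> strat
| Rs : R -> strat.

Definition is_R (s : strat) : bool := match s with Rs _ => true | Bs _ => false end.

Definition r (u : R -> R -> R) (s s' : strat) : R :=
  match s, s' with
  | Bs a, _ => a
  | Rs al, Bs b => BR u b al
  | Rs al, Rs al' => NE u al al'
  end.

Definition fit (u : R -> R -> R) (epsR : R) (s s' : strat) : R :=
  u (r u s s') (r u s' s) - epsR * (if is_R s then 1 else 0).

Definition isNash (f : strat -> strat -> R) (s : strat) : Prop :=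
  forall s', f s' s <= f s s.

Definition isNSS (f : strat -> strat -> R) (s : strat) : Prop :=
  isNash f s /\ forall s', f s' s = f s s -> f s' s' <= f s s'.

Definition isESS (f : strat -> strat -> R) (s : strat) : Prop :=
  isNash f s /\ forall s', s' <> s -> f s' s = f s s -> f s' s' < f s s'.

(** The symmetric equilibrium action [x = NE(0,0)] of the base game is, by (A2)
    with [alpha = 0], the strict best reply to itself; so [B(x)] cannot be
    invaded by another [B(a)], nor by any [R(alpha)], which pays the penalty
    [epsR] on top of a payoff of at most [u x x].  Conversely, [B(a)] is Nash
    only if [a] is a best reply to itself, i.e. [(a, a)] is the equilibrium of
    [G(0,0)]; and [R(alpha)] is never Nash: against it, [B(y)] with
    [y = NE(alpha, alpha)] earns [u y y], the same payoff as [R(alpha)] itself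
    but without the penalty. *)

From Stdlib Require Import Reals Lra ClassicalEpsilon.
Open Scope R_scope.

Section Game.

Variable u : R -> R -> R.

Lemma V_0 x y : V u 0 x y = u x y.
Proof. unfold V; ring. Qed.

Section NashEquilibria.

Hypothesis A1 : Assumption_A1 u.

Lemma NEpair_spec ai aj :
  isNEpair u ai aj (fst (NEpair u ai aj)) (snd (NEpair u ai aj)).
Proof.
  unfold NEpair.
  apply (epsilon_spec (inhabits (0, 0))
           (fun p : R * R => isNEpair u ai aj (fst p) (snd p))).
  destruct (A1 ai aj) as [p [Hp _]]; now exists p.
Qed.

Lemma NEpair_eq ai aj x y : isNEpair u ai aj x y -> NEpair u ai aj = (x, y).
Proof.
  intros Hxy; destruct (A1 ai aj) as [p [_ Hunique]].
  rewrite <- (Hunique (x, y) Hxy).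
  exact (eq_sym (Hunique _ (NEpair_spec ai aj))).
Qed.

Lemma isNEpair_sym al x y : isNEpair u al al x y -> isNEpair u al al y x.
Proof. now intros [Hx Hy]; split. Qed.

Lemma NE_diag al : isNEpair u al al (NE u al al) (NE u al al).
Proof.
  unfold NE; pose proof (NEpair_spec al al) as Hp.
  pose proof (NEpair_eq _ _ _ _ (isNEpair_sym _ _ _ Hp)) as Hswap.
  destruct (NEpair u al al) as [x y]; simpl in *.
  injection Hswap as -> _; exact Hp.
Qed.

Lemma self_best_reply_NE00 a : (forall b, u b a <= u a a) -> a = NE u 0 0.
Proof.
  intros Ha.
  assert (Haa : isNEpair u 0 0 a a) by (split; intro; rewrite !V_0; apply Ha).
  unfold NE; now rewrite (NEpair_eq _ _ _ _ Haa).
Qed.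

Lemma NE00_best_reply b : u b (NE u 0 0) <= u (NE u 0 0) (NE u 0 0).
Proof.
  destruct (NE_diag 0) as [H _]; specialize (H b); now rewrite !V_0 in H.
Qed.

End NashEquilibria.

Section BestReplies.

Hypothesis A2 : Assumption_A2 u.

Lemma BR_spec b al a' : V u al a' b <= V u al (BR u b al) b.
Proof.
  revert a'; unfold BR.
  apply (epsilon_spec (inhabits 0)
           (fun a : R => forall a', V u al a' b <= V u al a b)).
  destruct (A2 b al) as [a [Ha _]]; now exists a.
Qed.

Lemma BR_eq b al a : (forall a', V u al a' b <= V u al a b) -> BR u b al = a.
Proof.
  intros Ha; destruct (A2 b al) as [c [_ Hunique]].
  rewrite <- (Hunique a Ha); symmetry; apply Hunique, BR_spec.
Qed.

End BestReplies.

Section Stability.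

Variable epsR : R.
Hypothesis epsR_gt0 : 0 < epsR.
Hypothesis A1 : Assumption_A1 u.
Hypothesis A2 : Assumption_A2 u.

Lemma fit_Bs a s : fit u epsR (Bs a) s = u a (r u s (Bs a)).
Proof. unfold fit; simpl; ring. Qed.

Lemma fit_Rs al s :
  fit u epsR (Rs al) s = u (r u (Rs al) s) (r u s (Rs al)) - epsR.
Proof. unfold fit; simpl; ring. Qed.

Lemma NE00_strict_best_reply a :
  a <> NE u 0 0 -> u a (NE u 0 0) < u (NE u 0 0) (NE u 0 0).
Proof.
  intros Ha; pose proof (NE00_best_reply A1) as Hx.
  set (x := NE u 0 0) in *.
  destruct (Rlt_or_le (u a x) (u x x)) as [Hlt | Hge]; [exact Hlt |].
  exfalso; apply Ha.
  (* both [a] and [x] maximize [u _ x], so both equal [BR x 0] *)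
  rewrite <- (BR_eq A2 x 0 a), (BR_eq A2 x 0 x); [reflexivity | |];
    intros b; rewrite !V_0; specialize (Hx b); lra.
Qed.

Lemma isNash_Bs_NE00 : isNash (fit u epsR) (Bs (NE u 0 0)).
Proof.
  intros s; pose proof (NE00_best_reply A1 (r u s (Bs (NE u 0 0)))).
  destruct s as [a | al]; [rewrite !fit_Bs | rewrite fit_Rs, fit_Bs];
    simpl in *; lra.
Qed.

Lemma isNash_Bs a : isNash (fit u epsR) (Bs a) -> a = NE u 0 0.
Proof.
  intros Hnash; apply (self_best_reply_NE00 A1); intros b.
  specialize (Hnash (Bs b)); now rewrite !fit_Bs in Hnash.
Qed.

Lemma Rs_not_Nash al : ~ isNash (fit u epsR) (Rs al).
Proof.
  intros Hnash; set (y := NE u al al).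
  assert (HBR : BR u y al = y).
  { apply (BR_eq A2); apply (NE_diag A1 al). }
  specialize (Hnash (Bs y)); rewrite fit_Bs, fit_Rs in Hnash; simpl in Hnash.
  fold y in Hnash; rewrite HBR in Hnash; lra.
Qed.

Lemma isNash_iff_NE00 s :
  isNash (fit u epsR) s <-> s = Bs (NE u 0 0).
Proof.
  split.
  - destruct s as [a | al]; intros Hnash.
    + now rewrite (isNash_Bs a Hnash).
    + exact (False_ind _ (Rs_not_Nash al Hnash)).
  - intros ->; exact isNash_Bs_NE00.
Qed.

(** The stability condition holds vacuously: no mutant ties with [B(NE(0,0))]
    against it. *)
Lemma no_tie_with_Bs_NE00 s :
  s <> Bs (NE u 0 0) ->
  fit u epsR s (Bs (NE u 0 0)) < fit u epsR (Bs (NE u 0 0)) (Bs (NE u 0 0)).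
Proof.
  intros Hs; rewrite fit_Bs; destruct s as [a | al].
  - rewrite fit_Bs; simpl.
    apply NE00_strict_best_reply; intros ->; now apply Hs.
  - rewrite fit_Rs; simpl.
    pose proof (NE00_best_reply A1 (BR u (NE u 0 0) al)); lra.
Qed.

End Stability.

End Game.

Theorem proposition2 (u : R -> R -> R) (epsR : R) :
  Assumption_A1 u -> Assumption_A2 u -> 0 < epsR ->
  (forall s : strat, isNash (fit u epsR) s <-> s = Bs (NE u 0 0)) /\
  isESS (fit u epsR) (Bs (NE u 0 0)).
Proof.
  intros A1 A2 HepsR; split.
  - intros s; exact (isNash_iff_NE00 u epsR HepsR A1 A2 s).
  - split; [exact (isNash_Bs_NE00 u epsR HepsR A1) |].
    intros s Hs Htie.
    pose proof (no_tie_with_Bs_NE00 u epsR HepsR A1 A2 s Hs); lra.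
Qed.
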